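(* Let $(A,\circ_A)$ be a Leibniz algebra and $(l,r,V)$ a representation of it. Every invertible anti-$\mathcal O$-operator $T:V\to A$ of $(A,\circ_A)$ associated to $(l,r,V)$ is strong.
   Context: All vector spaces are finite-dimensional over a field $\mathbb K$ of characteristic zero. A Leibniz algebra is a vector space $A$ with a multiplication $\circ_A$ satisfying $x\circ_A(y\circ_A z)=(x\circ_A y)\circ_A z+y\circ_A(x\circ_A z)$. A representation of $(A,\circ_A)$ is a triple $(l,r,V)$ with linear maps $l,r:A\to\mathrm{End}(V)$ such that for all $x,y\in A,v\in V$: $l(x\circ_A y)v=l(x)l(y)v-l(y)l(x)v$; $r(x\circ_A y)v=l(x)r(y)v-r(y)l(x)v$; $r(y)l(x)v=-r(y)r(x)v$. An anti-$\mathcal O$-operator of $(A,\circ_A)$ associated to $(l,r,V)$ is a linear map $T:V\to A$ with $(Tu)\circ_A(Tv)=-T\big(l(Tu)v+r(Tv)u\big)$ for all $u,v\in V$; it is strong if moreover $l\big((Tu)\circ_A(Tv)\big)w+r\big((Tu)\circ_A(Tw)\big)v-r\big((Tv)\circ_A(Tw)\big)u=0$ for all $u,v,w\in V$. *)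

From HB Require Import structures.
From mathcomp Require Import all_boot all_order all_algebra.
Set Implicit Arguments. Unset Strict Implicit. Unset Printing Implicit Defensive.
Import GRing.Theory.
Local Open Scope ring_scope.

Definition bilinear_mul (K : fieldType) (A : vectType K) (mul : A -> A -> A) :=
  (forall x, linear (mul x)) /\ (forall y, linear (fun x => mul x y)).

Definition leibniz_identity (K : fieldType) (A : vectType K) (mul : A -> A -> A) :=
  forall x y z, mul x (mul y z) = mul (mul x y) z + mul y (mul x z).

Definition is_leibniz_algebra (K : fieldType) (A : vectType K) (mul : A -> A -> A) :=
  bilinear_mul mul /\ leibniz_identity mul.

Definition is_leibniz_rep (K : fieldType) (A V : vectType K) (mul : A -> A -> A)
    (l r : A -> 'End(V)) :=
  [/\ linear l, linear r,
      forall x y v, l (mul x y) v = l x (l y v) - l y (l x v),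
      forall x y v, r (mul x y) v = l x (r y v) - r y (l x v) &
      forall x y v, r y (l x v) = - r y (r x v)].

Definition is_anti_O_operator (K : fieldType) (A V : vectType K) (mul : A -> A -> A)
    (l r : A -> 'End(V)) (T : 'Hom(V, A)) :=
  forall u v, mul (T u) (T v) = - T (l (T u) v + r (T v) u).

Definition is_strong_anti_O_operator (K : fieldType) (A V : vectType K)
    (mul : A -> A -> A) (l r : A -> 'End(V)) (T : 'Hom(V, A)) :=
  is_anti_O_operator mul l r T /\
  forall u v w, l (mul (T u) (T v)) w + r (mul (T u) (T w)) v
                - r (mul (T v) (T w)) u = 0.

From HB Require Import structures.
From mathcomp Require Import all_boot all_order all_algebra.
Set Implicit Arguments. Unset Strict Implicit. Unset Printing Implicit Defensive.
Import GRing.Theory.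
Local Open Scope ring_scope.

(* Let S be the expression that strongness requires to vanish and put
   x = T u, y = T v, z = T w.  The representation axioms rewrite S as -D for a
   combination D of iterated actions of x, y, z, while three applications of
   the anti-O-operator identity together with the Leibniz identity for
   x (y z) give T S = T D.  Hence T S = - T S, so T S = 0 as 2 is invertible
   in K, and S = 0 because T is injective. *)

Lemma oppr_fixed_eq0 (K : fieldType) (M : lmodType K) (x : M) :
  2 \notin [pchar K] -> x = - x -> x = 0.
Proof.
move=> char2 x_eqN.
have two_neq0 : (2%:R : K) != 0 by move: char2; rewrite inE.
have : (2%:R : K) *: x = 0 by rewrite scaler_nat mulr2n {1}x_eqN addNr.
by move/eqP; rewrite scaler_eq0 (negPf two_neq0) => /eqP.
Qed.

Lemma addr_sub_sub_cancel (M : zmodType) (a b c d e f : M) :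
  (a - b) + (c - d) - (e + f) = - ((d + f) + (b + e) - (a + c)).
Proof.
rewrite opprB addrACA -opprD -[LHS]addrA -opprD.
by rewrite [(b + d) + _]addrACA [(b + e) + _]addrC.
Qed.

Lemma addr_opp_sub_cancel (M : zmodType) (p q a b c : M) :
  (- p + a) + (- q + b) - (- (p + q) + c) = a + b - c.
Proof. by rewrite addrACA -opprD [- (_ + c)]opprD addrACA subrr add0r. Qed.

Section AntiOOperator.

Variables (K : fieldType) (A V : vectType K) (mul : A -> A -> A).
Variables (l r : A -> 'End(V)) (T : 'Hom(V, A)).

Definition rep_defect (x y z : A) (u v w : V) :=
  l (mul x y) w + r (mul x z) v - r (mul y z) u.

(* For x = T u, y = T v, z = T w the three sums l x v + r y u, l x w + r z u
   and l y w + r z v are, up to sign, the T-preimages of x y, x z and y z. *)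
Definition rep_cross (x y z : A) (u v w : V) :=
  r z (l x v + r y u) + l y (l x w + r z u) - l x (l y w + r z v).

Lemma rep_defectE x y z u v w : is_leibniz_rep mul l r ->
  rep_defect x y z u v w = - rep_cross x y z u v w.
Proof.
case=> _ _ l_mul r_mul r_l.
rewrite /rep_defect /rep_cross l_mul !r_mul (r_l y z u) opprK.
rewrite [r z (_ + _)]linearD [l y (_ + _)]linearD [l x (_ + _)]linearD.
exact: addr_sub_sub_cancel.
Qed.

Hypothesis T_anti : is_anti_O_operator mul l r T.

Lemma anti_O_mulE p q : mul (T p) (T q) = T (- (l (T p) q + r (T q) p)).
Proof. by rewrite T_anti linearN. Qed.

Lemma anti_O_lE p q : T (l (T p) q) = - mul (T p) (T q) - T (r (T q) p).
Proof. by rewrite T_anti opprK linearD addrK. Qed.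

Lemma anti_O_rE p q : T (r (T q) p) = - mul (T p) (T q) - T (l (T p) q).
Proof. by rewrite T_anti opprK linearD [X in X - _]addrC addrK. Qed.

Lemma anti_O_rep_defectE u v w : leibniz_identity mul ->
  T (rep_defect (T u) (T v) (T w) u v w) =
  T (rep_cross (T u) (T v) (T w) u v w).
Proof.
move=> leib; rewrite /rep_defect /rep_cross.
have Euv := anti_O_mulE u v; have Euw := anti_O_mulE u w.
have Evw := anti_O_mulE v w.
rewrite {1}Euv {1}Euw {1}Evw [in LHS]linearB [in LHS]linearD /=.
rewrite (anti_O_lE _ w) (anti_O_rE v) (anti_O_rE u) -Euv -Euw -Evw.
rewrite (leib (T u) (T v) (T w)) !linearN.
rewrite [in RHS]linearB [in RHS]linearD /= !opprK.
exact: addr_opp_sub_cancel.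
Qed.

Lemma anti_O_rep_defect_eq0 u v w :
  2 \notin [pchar K] -> leibniz_identity mul -> is_leibniz_rep mul l r ->
  T (rep_defect (T u) (T v) (T w) u v w) = 0.
Proof.
move=> char2 leib rep; apply: oppr_fixed_eq0 char2 _.
by rewrite {2}rep_defectE // linearN opprK anti_O_rep_defectE.
Qed.

End AntiOOperator.

Theorem proposition2p10 (K : fieldType) (charK0 : [pchar K] =i pred0)
    (A V : vectType K) (mul : A -> A -> A) (l r : A -> 'End(V))
    (T : 'Hom(V, A)) :
  is_leibniz_algebra mul ->
  is_leibniz_rep mul l r ->
  bijective T ->
  is_anti_O_operator mul l r T ->
  is_strong_anti_O_operator mul l r T.
Proof.
move=> [_ leib] rep /bij_inj T_inj T_anti; split=> // u v w.
apply: T_inj; rewrite linear0.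
have char2 : 2 \notin [pchar K] by rewrite charK0.
exact: anti_O_rep_defect_eq0 T_anti u v w char2 leib rep.
Qed.
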